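(* The following are equivalent: (1) for every group $G$, every transitive function $u:\rho\to G$ is trivial; (2) $A(\Gamma)^N=B(\Gamma)^N$, where $^N$ denotes normal closure in $F(\Gamma)$; (3) every generator $b$ of $B(\Gamma)$ (of the form described in the context) can be written as $b=g_1x_1g_1^{-1}\cdots g_mx_mg_m^{-1}$ for some $m\ge1$, $g_1,\dots,g_m\in F(\Gamma)$ and $x_1,\dots,x_m$ among the generators of $A(\Gamma)$ described in the context.
   Context: $\rho$ is a preorder on $\{1,\dots,n\}$, $\mathcal C$ the poset of its equivalence classes ($i\sim j$ iff $i\rho j$ and $j\rho i$; $\hat i\le\hat j$ iff $i\rho j$). A transitive function on $\rho$ with values in $G$ is $u:\rho\to G$ with $u(i,j)u(j,r)=u(i,r)$ whenever $i\rho j$, $j\rho r$; it is trivial if there are $g_1,\dots,g_n\in G$ with $u(i,j)=g_ig_j^{-1}$ for all $i\rho j$. $\Gamma=(\Gamma_0,\Gamma_1)$ is the directed graph with $\Gamma_0=\mathcal C$ and an arrow from $\alpha$ to $\beta$ iff $\alpha<\beta$ and there is no $\gamma$ with $\alpha<\gamma<\beta$. $F(\Gamma)$ is the free group on $\Gamma_1$. $A(\Gamma)$ is the subgroup generated by all elements $a_1\cdots a_rb_p^{-1}\cdots b_1^{-1}$ where $a_1\cdots a_r$ and $b_1\cdots b_p$ are paths in $\Gamma$ with the same start vertex and the same end vertex. $B(\Gamma)$ is the subgroup generated by all elements $a_1a_2^{\varepsilon_2}\cdots a_m^{\varepsilon_m}$, where $a_1,\dots,a_m$ are arrows forming in this order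 a cycle in the undirected graph underlying $\Gamma$, and $\varepsilon_i=1$ if $a_i$ is traversed in the direction of the cycle determined by $a_1$, $\varepsilon_i=-1$ otherwise. (One has $A(\Gamma)\subseteq B(\Gamma)$.) *)

From HB Require Import structures.
From mathcomp Require Import all_boot.
Set Implicit Arguments. Unset Strict Implicit. Unset Printing Implicit Defensive.

Definition is_group (G : Type) (mul : G -> G -> G) (one : G) (inv : G -> G) : Prop :=
  [/\ forall x y z, mul x (mul y z) = mul (mul x y) z,
      forall x, mul one x = x &
      forall x, mul (inv x) x = one].

(* The Hasse quiver Gamma of the poset of classes of a preorder rho.   *)
Section Quiver.
Variables (n : nat) (rho : rel 'I_n).

Definition cls (i : 'I_n) : {set 'I_n} := [set j | rho i j && rho j i].
Definition is_cls (A : {set 'I_n}) : bool := [exists i, A == cls i].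
Definition cle (A B : {set 'I_n}) : bool :=
  [exists i, exists j, [&& A == cls i, B == cls j & rho i j]].
Definition clt (A B : {set 'I_n}) : bool := cle A B && (A != B).

Definition is_arrow (a : {set 'I_n} * {set 'I_n}) : bool :=
  [&& is_cls a.1, is_cls a.2, clt a.1 a.2 &
      ~~ [exists C, [&& is_cls C, clt a.1 C & clt C a.2]]].

Definition arrow := {a : {set 'I_n} * {set 'I_n} | is_arrow a}.
Definition src (a : arrow) : {set 'I_n} := (sval a).1.
Definition tgt (a : arrow) : {set 'I_n} := (sval a).2.

(* Free group F(Gamma): elements are represented by words of letters
   (a, true) = a and (a, false) = a^-1, modulo free reduction. *)
Definition word := seq (arrow * bool).
Definition winv (w : word) : word := rev (map (fun l => (l.1, ~~ l.2)) w).

Inductive red1 : word -> word -> Prop :=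
  | red1_intro w1 w2 a e : red1 (w1 ++ (a, e) :: (a, ~~ e) :: w2) (w1 ++ w2).

Inductive freeq : word -> word -> Prop :=
  | freeq_refl w : freeq w w
  | freeq_step w1 w2 : red1 w1 w2 -> freeq w1 w2
  | freeq_sym w1 w2 : freeq w1 w2 -> freeq w2 w1
  | freeq_trans w1 w2 w3 : freeq w1 w2 -> freeq w2 w3 -> freeq w1 w3.

(* (preimage in words of) the normal closure in F(Gamma) of a set S *)
Inductive ncl (S : word -> Prop) : word -> Prop :=
  | ncl_gen x : S x -> ncl S x
  | ncl_one : ncl S [::]
  | ncl_mul x y : ncl S x -> ncl S y -> ncl S (x ++ y)
  | ncl_inv x : ncl S x -> ncl S (winv x)
  | ncl_conj g x : ncl S x -> ncl S (g ++ x ++ winv g)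
  | ncl_freeq x y : freeq x y -> ncl S x -> ncl S y.

Definition pos (a : arrow) : arrow * bool := (a, true).
Definition linked (a b : arrow) : bool := tgt a == src b.

(* generators of A(Gamma): a_1...a_r b_p^-1 ... b_1^-1 for two (nonempty)
   paths a_1...a_r, b_1...b_p with same start and same end vertex *)
Definition Agen (x : word) : Prop :=
  exists (a : arrow) (p : seq arrow) (b : arrow) (q : seq arrow),
    [/\ path linked a p, path linked b q,
        src a = src b, tgt (last a p) = tgt (last b q) &
        x = map pos (a :: p) ++ winv (map pos (b :: q))].

Definition lstart (l : arrow * bool) : {set 'I_n} :=
  if l.2 then src l.1 else tgt l.1.
Definition lfinish (l : arrow * bool) : {set 'I_n} :=
  if l.2 then tgt l.1 else src l.1.
Definition lchain (l1 l2 : arrow * bool) : bool := lfinish l1 == lstart l2.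

(* generators of B(Gamma): a_1 a_2^e2 ... a_m^em for a cycle a_1,...,a_m
   of the underlying undirected graph (distinct vertices, distinct arrows),
   oriented so that a_1 is traversed forwards *)
Definition Bgen (x : word) : Prop :=
  exists (a : arrow) (s : word),
    [/\ x = (a, true) :: s,
        path lchain (a, true) s,
        lfinish (last (a, true) s) = src a,
        uniq (map lstart x) &
        uniq (map fst x)].

End Quiver.

(* A transitive function u on rho is, after choosing a representative in each class, a
   labelling of the arrows of Gamma whose product along any two directed paths with the same
   ends agrees, i.e. which kills A(Gamma); u is trivial exactly when this labelling is a
   difference of potentials, i.e. when it kills every closed walk of Gamma. Every closed walk
   lies in B(Gamma)^N (split it at a repeated vertex, cancel a backtrack, or rotate it into a
   cycle), which gives (2) => (1). Conversely, applying (1) in F(Gamma)/A(Gamma)^N to the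
   function sending i rho j to a chosen Hasse path from the class of i to that of j yields a
   potential there, so every cycle, i.e. every generator of B(Gamma), lies in A(Gamma)^N.
   Finally (2) <=> (3) because a normal closure consists of products of conjugates. *)

From HB Require Import structures.
From mathcomp Require Import all_boot zify.
From Stdlib Require Import ProofIrrelevance FunctionalExtensionality PropExtensionality.
Set Implicit Arguments. Unset Strict Implicit. Unset Printing Implicit Defensive.

Section FreeGroup.
Variables (n : nat) (rho : rel 'I_n).
Local Notation word := (word rho).
Local Notation arrow := (arrow rho).

Definition lflip (l : arrow * bool) := (l.1, ~~ l.2).

Lemma winv_cons (l : arrow * bool) (s : word) : winv (l :: s) = winv s ++ [:: lflip l].
Proof. by rewrite /winv /= rev_cons cats1. Qed.

Lemma winv_cat (x y : word) : winv (x ++ y) = winv y ++ winv x.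
Proof. by rewrite /winv map_cat rev_cat. Qed.

Lemma winvK : involutive (@winv n rho).
Proof.
elim=> [//|[a e] s IH]; rewrite winv_cons winv_cat IH /=.
by rewrite negbK.
Qed.

Lemma freeq_ctx (p q w1 w2 : word) : freeq w1 w2 -> freeq (p ++ w1 ++ q) (p ++ w2 ++ q).
Proof.
elim=> {w1 w2} [w|w1 w2 H|w1 w2 _ IH|w1 w2 w3 _ IH1 _ IH2].
- exact: freeq_refl.
- case: H => v1 v2 a e; apply: freeq_step.
  have -> : p ++ (v1 ++ [:: (a, e), (a, ~~ e) & v2]) ++ q
        = (p ++ v1) ++ (a, e) :: (a, ~~ e) :: (v2 ++ q) by rewrite -!catA.
  have -> : p ++ (v1 ++ v2) ++ q = (p ++ v1) ++ (v2 ++ q) by rewrite -!catA.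
  exact: red1_intro.
- exact: freeq_sym.
- exact: freeq_trans IH2.
Qed.

Lemma freeq_cat (x x' y y' : word) : freeq x x' -> freeq y y' -> freeq (x ++ y) (x' ++ y').
Proof.
move=> Hx Hy; apply: (@freeq_trans _ _ _ (x' ++ y)).
  by have := freeq_ctx [::] y Hx.
by have := freeq_ctx x' [::] Hy; rewrite !cats0.
Qed.

Lemma freeq_catV (w : word) : freeq (w ++ winv w) [::].
Proof.
elim: w => [|[a e] s IH]; first exact: freeq_refl.
rewrite winv_cons /= catA.
apply: (@freeq_trans _ _ _ [:: (a, e); (a, ~~ e)]).
  by have := freeq_ctx [:: (a, e)] [:: (a, ~~ e)] IH.
by apply: freeq_step; have := @red1_intro _ _ [::] [::] a e.
Qed.

Lemma freeq_Vcat (w : word) : freeq (winv w ++ w) [::].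
Proof. by have := freeq_catV (winv w); rewrite winvK. Qed.

Lemma freeq_winv (x y : word) : freeq x y -> freeq (winv x) (winv y).
Proof.
elim=> {x y} [w|w1 w2 H|w1 w2 _ IH|w1 w2 w3 _ IH1 _ IH2].
- exact: freeq_refl.
- case: H => v1 v2 a e; apply: freeq_step.
  rewrite !winv_cat !winv_cons /= /lflip /= negbK -!catA /=; exact: red1_intro.
- exact: freeq_sym.
- exact: freeq_trans IH2.
Qed.

Lemma ncl_sub (S T : word -> Prop) :
  (forall x, S x -> ncl T x) -> forall w, ncl S w -> ncl T w.
Proof.
move=> HST w; elim=> {w}.
- exact: HST.
- exact: ncl_one.
- by move=> x y _ Hx _ Hy; apply: ncl_mul.
- by move=> x _ Hx; apply: ncl_inv.
- by move=> g x _ Hx; apply: ncl_conj.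
- by move=> x y Hxy _ Hx; apply: ncl_freeq Hx.
Qed.

Lemma ncl_freeq_nil (S : word -> Prop) (x : word) : freeq x [::] -> ncl S x.
Proof. by move=> Hx; apply: ncl_freeq (freeq_sym Hx) (ncl_one S). Qed.

Lemma ncl_rot (S : word -> Prop) (u1 u2 : word) : ncl S (u2 ++ u1) -> ncl S (u1 ++ u2).
Proof.
move=> H; apply: ncl_freeq (ncl_conj u1 H).
rewrite !catA -(catA _ u1) -[X in freeq _ X]cats0.
exact: freeq_cat (freeq_refl _) (freeq_catV u1).
Qed.

End FreeGroup.

Section Classes.
Variables (n : nat) (rho : rel 'I_n).
Hypotheses (rho_refl : reflexive rho) (rho_trans : transitive rho).
Local Notation cls := (cls rho).
Local Notation cle := (cle rho).
Local Notation clt := (clt rho).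

Lemma cls_mem i : i \in cls i.
Proof. by rewrite inE rho_refl. Qed.

Lemma cls_eqP i j : (cls i == cls j) = rho i j && rho j i.
Proof.
apply/eqP/andP => [Eij|[Hij Hji]].
  by have := cls_mem j; rewrite -Eij inE => /andP.
apply/setP => k; rewrite !inE; apply/andP/andP => [][Hik Hki]; split.
- exact: rho_trans Hik.
- exact: rho_trans Hij.
- exact: rho_trans Hik.
- exact: rho_trans Hji.
Qed.

Lemma cls_eq i j : rho i j -> rho j i -> cls i = cls j.
Proof. by move=> Hij Hji; apply/eqP; rewrite cls_eqP Hij. Qed.

Lemma cls_eq_rho i j : cls i = cls j -> rho i j /\ rho j i.
Proof. by move/eqP; rewrite cls_eqP => /andP. Qed.

Lemma cleP A B : cle A B -> exists i j, [/\ A = cls i, B = cls j & rho i j].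
Proof. by case/existsP => i /existsP [j] /and3P [/eqP -> /eqP -> Hij]; exists i, j. Qed.

Lemma cle_cls i j : cle (cls i) (cls j) = rho i j.
Proof.
apply/idP/idP => [|Hij]; last by apply/existsP; exists i; apply/existsP; exists j; rewrite !eqxx Hij.
case/cleP => i' [j' [/cls_eq_rho [Hii' _] /cls_eq_rho [_ Hj'j] Hi'j']].
exact: rho_trans Hii' (rho_trans Hi'j' Hj'j).
Qed.

Lemma clt_cls i j : clt (cls i) (cls j) = rho i j && ~~ rho j i.
Proof. by rewrite /clt cle_cls cls_eqP; case: (rho i j). Qed.

Lemma clt_cle A B : clt A B -> cle A B.
Proof. by case/andP. Qed.

Lemma clt_irr A : clt A A = false.
Proof. by rewrite /clt eqxx andbF. Qed.

Lemma clt_trans A B C : clt A B -> clt B C -> clt A C.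
Proof.
move=> ltAB ltBC.
case/cleP: (clt_cle ltAB) => i [j [EA EB _]].
case/cleP: (clt_cle ltBC) => _ [k [_ EC _]].
move: ltAB ltBC; rewrite EA EC EB !clt_cls.
move=> /andP [Hij Hji] /andP [Hjk Hkj]; rewrite (rho_trans Hij Hjk).
by apply: contra Hkj => Hki; exact: rho_trans Hki Hij.
Qed.

Lemma clt_is_clsl A B : clt A B -> is_cls rho A.
Proof. by case/clt_cle/cleP => i [j [-> _ _]]; apply/existsP; exists i. Qed.

Lemma clt_is_clsr A B : clt A B -> is_cls rho B.
Proof. by case/clt_cle/cleP => i [j [_ -> _]]; apply/existsP; exists j. Qed.

Lemma arrow_clt (a : arrow rho) : clt (src a) (tgt a).
Proof. by case/and4P: (svalP a). Qed.

Definition cls_rep i := odflt i [pick x in cls i].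

Lemma cls_pick i : [pick x in cls i] = Some (cls_rep i).
Proof. by rewrite /cls_rep; case: pickP => [//|/(_ i)]; rewrite cls_mem. Qed.

Lemma cls_rep_rho i : rho i (cls_rep i) && rho (cls_rep i) i.
Proof. by rewrite /cls_rep; case: pickP => [x|_] /=; rewrite ?inE ?rho_refl. Qed.

Lemma cls_rep_cls i : cls (cls_rep i) = cls i.
Proof. by case/andP: (cls_rep_rho i) => Hir Hri; apply: cls_eq. Qed.

Lemma cls_rep_eq i j : cls i = cls j -> cls_rep i = cls_rep j.
Proof. by move=> Eij; apply: Some_inj; rewrite -!cls_pick Eij. Qed.

Lemma rho_cls_rep i j : rho i j -> rho (cls_rep i) (cls_rep j).
Proof.
move=> Hij; case/andP: (cls_rep_rho i) => _ Hri; case/andP: (cls_rep_rho j) => Hjr _.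
exact: rho_trans Hri (rho_trans Hij Hjr).
Qed.

End Classes.

Section Walks.
Variables (n : nat) (rho : rel 'I_n).
Local Notation word := (word rho).
Local Notation lstart := (@lstart n rho).
Local Notation lfinish := (@lfinish n rho).

Fixpoint walk (x : {set 'I_n}) (w : word) (y : {set 'I_n}) : bool :=
  if w is l :: s then (lstart l == x) && walk (lfinish l) s y else x == y.

Lemma walk_cat x y z (w1 w2 : word) : walk x w1 y -> walk y w2 z -> walk x (w1 ++ w2) z.
Proof.
elim: w1 x => [|l s IH] x /=; first by move/eqP->.
by case/andP => -> /IH Hs /Hs.
Qed.

Lemma walk_catP x z (w1 w2 : word) :
  walk x (w1 ++ w2) z -> exists y, walk x w1 y && walk y w2 z.
Proof.
elim: w1 x => [|l s IH] x /=; first by exists x; rewrite eqxx.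
by case/andP => -> /IH [y Hy]; exists y.
Qed.

Lemma walk_winv x y (w : word) : walk x w y -> walk y (winv w) x.
Proof.
elim: w x => [|[a e] s IH] x /=; first by rewrite eq_sym.
case/andP => /eqP Hl /IH Hs; rewrite winv_cons; apply: walk_cat Hs _.
by rewrite -{}Hl; case: e => /=; rewrite !eqxx.
Qed.

Lemma walk_lchain (l : arrow rho * bool) (s : word) y :
  walk (lfinish l) s y = path (@lchain n rho) l s && (lfinish (last l s) == y).
Proof. by elim: s l => [|l2 s IH] l //=; rewrite IH /lchain eq_sym andbA. Qed.

Lemma dpath_walk (a : arrow rho) (p : seq (arrow rho)) :
  path (@linked n rho) a p -> walk (src a) (map (@pos n rho) (a :: p)) (tgt (last a p)).
Proof.
elim: p a => [|b p IH] a /=; first by rewrite !eqxx.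
by case/andP => /eqP Eab /IH; rewrite eqxx -Eab.
Qed.

Lemma Agen_walk (x : word) : Agen x -> exists v, walk v x v.
Proof.
case=> a [p [b [q [Hp Hq Es Et ->]]]]; exists (src a).
apply: walk_cat (dpath_walk Hp) _; rewrite Et Es.
exact: walk_winv (dpath_walk Hq).
Qed.

Lemma Bgen_walk (b : word) : Bgen b -> exists v, walk v b v.
Proof. by case=> a [s [-> Hp /eqP Hl _ _]]; exists (src a); rewrite /= eqxx walk_lchain Hp. Qed.

Definition adjacent (A B : {set 'I_n}) : bool :=
  [exists a : arrow rho, (src a == A) && (tgt a == B) || (src a == B) && (tgt a == A)].

Lemma adjacent_sym : symmetric adjacent.
Proof. by move=> A B; apply: eq_existsb => a; rewrite orbC. Qed.

Lemma connect_adjacent_walk A B : connect adjacent A B -> exists w, walk A w B.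
Proof.
case/connectP => p + ->; elim: p A => [|C p IH] A /=; first by exists [::]; rewrite /= eqxx.
case/andP => /existsP [a Ha] /IH [w Hw].
case/orP: Ha => /andP [/eqP Es /eqP Et].
  by exists ((a, true) :: w); rewrite /= /lstart /lfinish /= Es eqxx Et.
by exists ((a, false) :: w); rewrite /= /lstart /lfinish /= Et eqxx Es.
Qed.

End Walks.

Lemma not_uniq_map_split (T : eqType) (U : eqType) (f : T -> U) (s : seq T) :
  ~~ uniq (map f s) -> exists s1 x s2 y s3, s = s1 ++ x :: s2 ++ y :: s3 /\ f x = f y.
Proof.
elim: s => [//|z s IH] /=; rewrite negb_and negbK; case/orP.
- case/mapP => y Hy Ezy; case/splitPr: Hy => s2 s3.
  by exists [::], z, s2, y, s3.
- case/IH => s1 [x [s2 [y [s3 [-> Exy]]]]].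
  by exists (z :: s1), x, s2, y, s3.
Qed.

Lemma uniq_map_split_neq (T : Type) (U : eqType) (f : T -> U) s1 x s2 y s3 :
  uniq (map f (s1 ++ x :: s2 ++ y :: s3)) -> f x != f y.
Proof.
rewrite map_cat cat_uniq /= map_cat mem_cat /= inE => /and3P [_ _ /andP [Hx _]].
by apply: contraNneq Hx => ->; rewrite eqxx orbT.
Qed.

Section ClosedWalks.
Variables (n : nat) (rho : rel 'I_n).
Hypotheses (rho_refl : reflexive rho) (rho_trans : transitive rho).
Local Notation word := (word rho).
Local Notation lstart := (@lstart n rho).
Local Notation walk := (@walk n rho).

Lemma walk_red1 x y (w w' : word) : red1 w w' -> walk x w y -> walk x w' y.
Proof.
case=> u1 u3 a e /walk_catP [m /andP [W1 /= /and3P [/eqP Em _ W3]]].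
apply: walk_cat W1 _; suff <- : lfinish (a, ~~ e) = m by [].
by rewrite -Em; case: (e).
Qed.

Lemma walk_dup_start x (w : word) y : walk x w y -> ~~ uniq (map lstart w) ->
  exists u1 u2 u3 v, [/\ w = u1 ++ u2 ++ u3, 0 < size u2, 0 < size u3 &
     [&& walk x u1 v, walk v u2 v & walk v u3 y]].
Proof.
move=> Hw /not_uniq_map_split [u1 [l [u2 [l' [u3 [Ew El]]]]]].
move: Hw; rewrite Ew => /walk_catP [v /andP [W1 /= /andP [/eqP Hl]]].
case/walk_catP => v' /andP [W2 /= /andP [/eqP Hl' W3]].
have Ev : v' = v by rewrite -Hl' -El Hl.
rewrite Ev in W2; exists u1, (l :: u2), (l' :: u3), v; split => //.
by rewrite W1 /= Hl eqxx W2 -El Hl eqxx W3.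
Qed.

Lemma walk_dup_arrow x (w : word) y : walk x w y -> uniq (map lstart w) ->
  ~~ uniq (map fst w) -> exists u1 a e u3, w = u1 ++ (a, e) :: (a, ~~ e) :: u3.
Proof.
move=> Hw Hu /not_uniq_map_split [u1 [[a e] [u2 [[a' e'] [u3 [Ew /= Ea]]]]]].
subst a' w; have Hne := uniq_map_split_neq Hu.
have Ee : e' = ~~ e by move: Hne; case: (e) (e') => [] [] //=; rewrite eqxx.
subst e'; case: u2 Hw Hu {Hne} => [|l u2] Hw Hu; first by exists u1, a, e, u3.
case/walk_catP: Hw => m /andP [_ /= /and3P [_ /eqP Hl _]].
have := @uniq_map_split_neq _ _ lstart (u1 ++ [:: (a, e)]) l u2 (a, ~~ e) u3.
by rewrite -catA => /(_ Hu); rewrite Hl; case: (e); rewrite /= eqxx.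
Qed.

Lemma backward_walk_clt x (w : word) y : walk x w y -> ~~ has snd w -> w != [::] ->
  clt rho y x.
Proof.
elim: w x => [//|[a e] s IH] x /= /andP [/eqP Hl Hw]; rewrite negb_or => /andP [He Hs] _.
have ltx : clt rho (lfinish (a, e)) x.
  by rewrite -{}Hl; move: He; case: (e) => // _; exact: arrow_clt.
case: s Hw Hs IH => [/eqP <- //|l s] Hw Hs IH.
exact: clt_trans (IH _ Hw Hs isT) ltx.
Qed.

Lemma uniq_closed_walk_Bgen x (w : word) : walk x w x -> uniq (map lstart w) ->
  uniq (map fst w) -> has snd w -> ncl (@Bgen n rho) w.
Proof.
move=> Hw Hu Hf /hasP [[a e] Hl /= He]; move: Hl; rewrite {}He => Hl.
case/splitPr: Hl Hw Hu Hf => u1 u2 Hw Hu Hf.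
apply: ncl_rot; apply: ncl_gen.
case/walk_catP: Hw => m /andP [W1 W2].
have /= /andP [/eqP Ea] := walk_cat W2 W1; rewrite walk_lchain => /andP [Hp /eqP Hl].
have Hperm : perm_eq (u1 ++ (a, true) :: u2) (((a, true) :: u2) ++ u1) by rewrite perm_catC.
exists a, (u2 ++ u1); split => //; first by rewrite Hl -Ea.
- by rewrite -(perm_uniq (perm_map _ Hperm)).
- by rewrite -(perm_uniq (perm_map _ Hperm)).
Qed.

Lemma closed_walk_ncl_Bgen x (w : word) : walk x w x -> ncl (@Bgen n rho) w.
Proof.
move: {2}(size w) (leqnn (size w)) => k; elim: k w x => [|k IH] w x.
  by case: w => // _ _; exact: ncl_one.
move=> Hsize Hw.
have [Hu|] := boolP (uniq (map lstart w)); last first.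
  case/(walk_dup_start Hw) => u1 [u2 [u3 [v [Ew Hu2 Hu3 /and3P [W1 W2 W3]]]]].
  move: Hsize; rewrite Ew !size_cat => Hsize.
  have N2 := IH u2 v ltac:(lia) W2.
  have N31 := IH (u3 ++ u1) v ltac:(rewrite size_cat; lia) (walk_cat W3 W1).
  apply: ncl_freeq (ncl_mul (ncl_conj u1 N2) (ncl_rot N31)).
  by have := freeq_ctx (u1 ++ u2) u3 (freeq_Vcat u1); rewrite -!catA.
have [Hf|] := boolP (uniq (map fst w)); last first.
  case/(walk_dup_arrow Hw Hu) => u1 [a [e [u3 Ew]]].
  have R : red1 w (u1 ++ u3) by rewrite Ew; exact: red1_intro.
  have Hs : size (u1 ++ u3) <= k by move: Hsize; rewrite Ew !size_cat /=; lia.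
  exact: ncl_freeq (freeq_sym (freeq_step R)) (IH _ x Hs (walk_red1 R Hw)).
have [|Hb] := boolP (has snd w); first exact: uniq_closed_walk_Bgen Hw Hu Hf.
case: w Hw Hb {Hsize Hu Hf} => [_ _|l s Hw Hb]; first exact: ncl_one.
by have := backward_walk_clt Hw Hb isT; rewrite clt_irr.
Qed.

End ClosedWalks.

Section HassePaths.
Variables (n : nat) (rho : rel 'I_n).
Hypotheses (rho_refl : reflexive rho) (rho_trans : transitive rho).
Local Notation arrow := (arrow rho).
Local Notation clt := (clt rho).
Local Notation linked := (@linked n rho).

Definition clt_between A B : {set {set 'I_n}} := [set C | [&& is_cls rho C, clt A C & clt C B]].

Lemma clt_cover_arrow A B : clt A B -> clt_between A B = set0 ->
  exists a : arrow, src a = A /\ tgt a = B.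
Proof.
move=> ltAB Hnone.
have Ha : is_arrow rho (A, B).
  rewrite /is_arrow /= (clt_is_clsl ltAB) (clt_is_clsr ltAB) ltAB /=.
  by apply/existsP => -[C HC]; have := in_set0 C; rewrite -Hnone inE HC.
by exists (exist _ (A, B) Ha).
Qed.

Lemma clt_hasse_path A B : clt A B ->
  exists (a : arrow) (p : seq arrow), [/\ path linked a p, src a = A & tgt (last a p) = B].
Proof.
move: {2}#|clt_between A B| (leqnn #|clt_between A B|) => k.
elim: k A B => [|k IH] A B Hk ltAB; (have [Hnone|[C]] := set_0Vmem (clt_between A B);
  first by case: (clt_cover_arrow ltAB Hnone) => a [Ea Eb]; exists a, [::]).
  by move=> inC; move: Hk; rewrite leqn0 => /eqP /card0_eq /(_ C); rewrite inC.
rewrite inE => /and3P [HC ltAC ltCB].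
have CAC : C \notin clt_between A C by rewrite inE clt_irr !andbF.
have CCB : C \notin clt_between C B by rewrite inE clt_irr andbF.
have ltAC_AB : clt_between A C \proper clt_between A B.
  apply/properP; split; last by exists C; rewrite // inE HC ltAC.
  by apply/subsetP => D; rewrite !inE => /and3P [-> -> /(clt_trans rho_refl rho_trans)/(_ ltCB) ->].
have ltCB_AB : clt_between C B \proper clt_between A B.
  apply/properP; split; last by exists C; rewrite // inE HC ltAC.
  by apply/subsetP => D; rewrite !inE => /and3P [-> /(clt_trans rho_refl rho_trans ltAC) -> ->].
have := proper_card ltAC_AB; have := proper_card ltCB_AB => cardCB cardAC.
case: (IH A C ltac:(lia) ltAC) => a1 [p1 [Hp1 Ea1 Eb1]].
case: (IH C B ltac:(lia) ltCB) => a2 [p2 [Hp2 Ea2 Eb2]].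
exists a1, (p1 ++ a2 :: p2); split => //; last by rewrite last_cat.
by rewrite cat_path Hp1 /= Hp2 andbT /linked Eb1 Ea2 eqxx.
Qed.

Lemma dpath_clt (a : arrow) p : path linked a p -> clt (src a) (tgt (last a p)).
Proof.
elim: p a => [|b p IH] a /=; first by move=> _; exact: arrow_clt.
case/andP => /eqP Eab /IH; rewrite -Eab.
exact: (clt_trans rho_refl rho_trans (arrow_clt a)).
Qed.

End HassePaths.

Section ConjugateProducts.
Variables (n : nat) (rho : rel 'I_n).
Local Notation word := (word rho).

Definition conj_word (gx : word * word) : word := gx.1 ++ gx.2 ++ winv gx.1.
Definition prod_conj (l : seq (word * word)) : word := flatten (map conj_word l).

Lemma prod_conj_cat l1 l2 : prod_conj (l1 ++ l2) = prod_conj l1 ++ prod_conj l2.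
Proof. by rewrite /prod_conj map_cat flatten_cat. Qed.

Lemma winv_prod_conj l :
  winv (prod_conj l) = prod_conj (rev (map (fun gx => (gx.1, winv gx.2)) l)).
Proof.
elim: l => [//|gx l IH].
rewrite /= rev_cons -cats1 prod_conj_cat -IH /prod_conj /= cats0 winv_cat.
by rewrite /conj_word !winv_cat winvK -catA.
Qed.

Lemma freeq_conj_prod_conj g l :
  freeq (g ++ prod_conj l ++ winv g) (prod_conj (map (fun gx => (g ++ gx.1, gx.2)) l)).
Proof.
elim: l => [|gx l IH]; first exact: freeq_catV.
rewrite /= -/(prod_conj l) -/(prod_conj (map _ l)).
apply: (@freeq_trans _ _ _ ((g ++ conj_word gx ++ winv g) ++ (g ++ prod_conj l ++ winv g))).
  apply: freeq_sym.
  by have := freeq_ctx (g ++ conj_word gx) (prod_conj l ++ winv g) (freeq_Vcat g); rewrite -!catA.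
apply: freeq_cat IH.
by rewrite /conj_word /= winv_cat -!catA; exact: freeq_refl.
Qed.

Lemma Agen_winv (x : word) : Agen x -> Agen (winv x).
Proof. by case=> a [p [b [q [Hp Hq Es Et ->]]]]; exists b, q, a, p; rewrite winv_cat winvK. Qed.

Lemma ncl_Agen_prod_conj w : ncl (@Agen n rho) w ->
  exists l, (forall gx, gx \in l -> Agen gx.2) /\ freeq w (prod_conj l).
Proof.
elim=> {w}.
- move=> x Hx; exists [:: ([::], x)]; split; first by move=> gx; rewrite inE => /eqP ->.
  by rewrite /prod_conj /conj_word /= !cats0; exact: freeq_refl.
- by exists [::]; split => //; exact: freeq_refl.
- move=> x y _ [l1 [H1 F1]] _ [l2 [H2 F2]]; exists (l1 ++ l2); split.
    by move=> gx; rewrite mem_cat => /orP [/H1|/H2].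
  by rewrite prod_conj_cat; exact: freeq_cat.
- move=> x _ [l [H F]]; exists (rev (map (fun gx => (gx.1, winv gx.2)) l)); split.
    by move=> gx; rewrite mem_rev => /mapP [gx0 /H Hg ->]; exact: Agen_winv.
  by rewrite -winv_prod_conj; exact: freeq_winv.
- move=> g x _ [l [H F]]; exists (map (fun gx => (g ++ gx.1, gx.2)) l); split.
    by move=> gx /mapP [gx0 /H Hg ->].
  exact: freeq_trans (freeq_ctx g (winv g) F) (freeq_conj_prod_conj g l).
- by move=> x y Fxy _ [l [H F]]; exists l; split => //; exact: freeq_trans (freeq_sym Fxy) F.
Qed.

Lemma prod_conj_ncl (S : word -> Prop) l : (forall gx, gx \in l -> S gx.2) ->
  ncl S (prod_conj l).
Proof.
elim: l => [|gx l IH] HS; first exact: ncl_one.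
apply: ncl_mul; first by apply/ncl_conj/ncl_gen/HS; rewrite mem_head.
by apply: IH => gx' Hg; apply: HS; rewrite inE Hg orbT.
Qed.

End ConjugateProducts.

Section AbstractGroup.
Variables (G : Type) (mul : G -> G -> G) (one : G) (inv : G -> G).
Hypothesis HG : is_group mul one inv.

Lemma grp_mulA x y z : mul x (mul y z) = mul (mul x y) z.
Proof. by case: HG. Qed.

Lemma grp_mul1g x : mul one x = x.
Proof. by case: HG. Qed.

Lemma grp_mulVg x : mul (inv x) x = one.
Proof. by case: HG. Qed.

Lemma grp_mulgV x : mul x (inv x) = one.
Proof.
rewrite -[LHS]grp_mul1g -(grp_mulVg (inv x)) -grp_mulA (grp_mulA (inv x)).
by rewrite grp_mulVg grp_mul1g.
Qed.

Lemma grp_mulg1 x : mul x one = x.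
Proof. by rewrite -(grp_mulVg x) grp_mulA grp_mulgV grp_mul1g. Qed.

Lemma grp_mulKg x y : mul (inv x) (mul x y) = y.
Proof. by rewrite grp_mulA grp_mulVg grp_mul1g. Qed.

Lemma grp_mulgK x y : mul (mul y x) (inv x) = y.
Proof. by rewrite -grp_mulA grp_mulgV grp_mulg1. Qed.

Lemma grp_mulgVK x y : mul (mul y (inv x)) x = y.
Proof. by rewrite -grp_mulA grp_mulVg grp_mulg1. Qed.

Lemma grp_invE x y : mul x y = one -> inv x = y.
Proof. by move=> Hxy; rewrite -[LHS]grp_mulg1 -Hxy grp_mulKg. Qed.

Lemma grp_invK x : inv (inv x) = x.
Proof. exact/grp_invE/grp_mulVg. Qed.

Lemma grp_invM x y : inv (mul x y) = mul (inv y) (inv x).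
Proof. by apply: grp_invE; rewrite grp_mulA -(grp_mulA x) grp_mulgV grp_mulg1 grp_mulgV. Qed.

Lemma grp_inv1 : inv one = one.
Proof. exact/grp_invE/grp_mul1g. Qed.

Section Evaluation.
Variables (n : nat) (rho : rel 'I_n) (f : arrow rho -> G).

Definition leval (l : arrow rho * bool) := if l.2 then f l.1 else inv (f l.1).
Definition weval (w : word rho) := foldr (fun l g => mul (leval l) g) one w.

Lemma weval_cat x y : weval (x ++ y) = mul (weval x) (weval y).
Proof. by elim: x => [|l s IH] /=; rewrite ?grp_mul1g // IH grp_mulA. Qed.

Lemma weval_winv x : weval (winv x) = inv (weval x).
Proof.
elim: x => [|[a e] s IH] /=; first by rewrite grp_inv1.
rewrite winv_cons weval_cat IH grp_invM //= grp_mulg1 //.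
by case: e; rewrite /leval /= ?grp_invK.
Qed.

Lemma weval_freeq x y : freeq x y -> weval x = weval y.
Proof.
elim=> {x y} [//|w1 w2 H|//|w1 w2 w3 _ E12 _ E23]; last by rewrite E12.
case: H => v1 v2 a e; rewrite !weval_cat /=; congr (mul _ _).
by rewrite grp_mulA; case: e; rewrite /leval /= ?grp_mulgV ?grp_mulVg grp_mul1g.
Qed.

Lemma weval_ncl (S : word rho -> Prop) : (forall x, S x -> weval x = one) ->
  forall w, ncl S w -> weval w = one.
Proof.
move=> HS w; elim=> {w}.
- exact: HS.
- by [].
- by move=> x y _ Hx _ Hy; rewrite weval_cat Hx Hy grp_mul1g.
- by move=> x _ Hx; rewrite weval_winv Hx grp_inv1.
- by move=> g x _ Hx; rewrite !weval_cat Hx grp_mul1g // weval_winv grp_mulgV.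
- by move=> x y Hxy _ Hx; rewrite -(weval_freeq Hxy).
Qed.

Lemma weval_walk_potential (h : {set 'I_n} -> G) :
    (forall a, f a = mul (h (src a)) (inv (h (tgt a)))) ->
  forall x w y, walk x w y -> weval w = mul (h x) (inv (h y)).
Proof.
move=> fh x w; elim: w x => [|[a e] s IH] x y /=; first by move/eqP ->; rewrite grp_mulgV.
case/andP => /eqP <- /IH ->; rewrite grp_mulA; congr (mul _ _).
by case: e; rewrite /leval /= fh ?grp_invM ?grp_invK grp_mulgVK.
Qed.

(* Potentials are built along walks from the root of each connected component. *)
Lemma closed_walks_potential : (forall x w, walk x w x -> weval w = one) ->
  exists h : {set 'I_n} -> G, forall a, f a = mul (h (src a)) (inv (h (tgt a))).
Proof.
move=> Hclosed; have csym := sym_connect_sym (@adjacent_sym n rho).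
have rootW A : exists w : word rho, walk (root (@adjacent n rho) A) w A.
  by apply: connect_adjacent_walk; rewrite csym connect_root.
pose W A := xchoose (rootW A).
exists (fun A => inv (weval (W A))) => a.
have Hr : root (@adjacent n rho) (src a) = root (@adjacent n rho) (tgt a).
  by apply/(rootP csym)/connect1/existsP; exists a; rewrite !eqxx.
have Hw : walk (root (@adjacent n rho) (src a)) (W (src a) ++ pos a :: winv (W (tgt a)))
               (root (@adjacent n rho) (src a)).
  apply: walk_cat (xchooseP (rootW _)) _.
  by rewrite /= /lstart /lfinish /= eqxx Hr; exact/walk_winv/(xchooseP (rootW _)).
move: (Hclosed _ _ Hw); rewrite weval_cat /= weval_winv => /grp_invE ->.
by rewrite grp_invK grp_mulgVK.
Qed.

End Evaluation.

Section TransitiveFunctions.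
Variables (n : nat) (rho : rel 'I_n).
Hypotheses (rho_refl : reflexive rho) (rho_trans : transitive rho).
Variable u : 'I_n -> 'I_n -> G.
Hypothesis u_trans : forall i j r, rho i j -> rho j r -> mul (u i j) (u j r) = u i r.
Local Notation cls := (cls rho).
Local Notation cls_rep := (cls_rep rho).

Lemma transitive_fun_id i : u i i = one.
Proof. by rewrite -[LHS](grp_mulKg (u i i)) u_trans // grp_mulVg. Qed.

Definition cls_fun (A B : {set 'I_n}) : G :=
  if ([pick x in A], [pick y in B]) is (Some x, Some y) then u x y else one.

Definition arrow_fun (a : arrow rho) := cls_fun (src a) (tgt a).

Lemma cls_fun_cls i j : cls_fun (cls i) (cls j) = u (cls_rep i) (cls_rep j).
Proof. by rewrite /cls_fun !cls_pick. Qed.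

Lemma cls_fun_trans A B C : cle rho A B -> cle rho B C ->
  mul (cls_fun A B) (cls_fun B C) = cls_fun A C.
Proof.
case/cleP => i [j [-> -> Hij]] /cleP [j' [k [Ej -> Hjk]]].
case: (cls_eq_rho rho_refl rho_trans Ej) => Hjj' _; rewrite !cls_fun_cls.
by apply: u_trans; apply: rho_cls_rep => //; exact: rho_trans Hjj' Hjk.
Qed.

Lemma weval_dpath_arrow_fun a p : path (@linked n rho) a p ->
  weval arrow_fun (map (@pos n rho) (a :: p)) = cls_fun (src a) (tgt (last a p)).
Proof.
elim: p a => [|b p IH] a; first by rewrite /= grp_mulg1.
rewrite [path _ _ _]/= => /andP [/eqP Eab Hp].
have -> : weval arrow_fun (map (@pos n rho) [:: a, b & p])
  = mul (arrow_fun a) (weval arrow_fun (map (@pos n rho) (b :: p))) by [].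
rewrite IH // -Eab.
apply: cls_fun_trans; first exact: clt_cle (arrow_clt a).
by rewrite Eab; exact: clt_cle (dpath_clt rho_refl rho_trans Hp).
Qed.

Lemma weval_Agen_arrow_fun x : Agen x -> weval arrow_fun x = one.
Proof.
case=> a [p [b [q [Hp Hq Es Et ->]]]].
by rewrite weval_cat weval_winv !weval_dpath_arrow_fun // Es Et grp_mulgV.
Qed.

Lemma transitive_fun_trivial (h : {set 'I_n} -> G) :
    (forall a, arrow_fun a = mul (h (src a)) (inv (h (tgt a)))) ->
  exists g : 'I_n -> G, forall i j, rho i j -> u i j = mul (g i) (inv (g j)).
Proof.
move=> fh.
have uh i j : rho i j -> u (cls_rep i) (cls_rep j) = mul (h (cls i)) (inv (h (cls j))).
  move=> Hij; have [Hji|Hji] := boolP (rho j i).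
    have Eij := cls_eq rho_refl rho_trans Hij Hji.
    by rewrite (cls_rep_eq rho_refl Eij) Eij transitive_fun_id grp_mulgV.
  have ltij : clt rho (cls i) (cls j) by rewrite clt_cls // Hij.
  case: (clt_hasse_path rho_refl rho_trans ltij) => a [p [Hp Ea Eb]].
  rewrite -cls_fun_cls -Ea -Eb -weval_dpath_arrow_fun //.
  exact: weval_walk_potential fh _ _ _ (dpath_walk Hp).
exists (fun i => mul (u i (cls_rep i)) (h (cls i))) => i j Hij.
case/andP: (cls_rep_rho rho_refl i) => Hir _; case/andP: (cls_rep_rho rho_refl j) => Hjr _.
rewrite grp_invM -!grp_mulA (grp_mulA (h (cls i))) -uh // grp_mulA.
by rewrite u_trans ?rho_cls_rep // -(u_trans Hij Hjr) grp_mulgK.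
Qed.

End TransitiveFunctions.
End AbstractGroup.

Section Quotient.
Variables (n : nat) (rho : rel 'I_n) (S : word rho -> Prop).
Local Notation word := (word rho).

Definition eqmod (x y : word) := ncl S (x ++ winv y).

Lemma eqmod_refl x : eqmod x x.
Proof. exact/ncl_freeq_nil/freeq_catV. Qed.

Lemma eqmod_sym x y : eqmod x y -> eqmod y x.
Proof. by move/ncl_inv; rewrite /eqmod winv_cat winvK. Qed.

Lemma eqmod_trans x y z : eqmod x y -> eqmod y z -> eqmod x z.
Proof.
move=> Hxy Hyz; apply: ncl_freeq (ncl_mul Hxy Hyz).
by have := freeq_ctx x (winv z) (freeq_Vcat y); rewrite -!catA.
Qed.

Lemma eqmod_cat x x' y y' : eqmod x x' -> eqmod y y' -> eqmod (x ++ y) (x' ++ y').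
Proof.
move=> Hx Hy; apply: ncl_freeq (ncl_mul (ncl_conj x Hy) Hx).
have := freeq_ctx (x ++ y ++ winv y') (winv x') (freeq_Vcat x).
by rewrite /eqmod winv_cat -!catA.
Qed.

Lemma eqmod_winv x y : eqmod x y -> eqmod (winv x) (winv y).
Proof.
move/eqmod_sym/(ncl_conj (winv x)); apply: ncl_freeq.
have := freeq_ctx (winv x ++ y) [::] (freeq_Vcat x).
by rewrite /eqmod !winvK !cats0 -!catA.
Qed.

Definition quot := {P : word -> Prop | exists w, P = eqmod w}.
Definition qclass (w : word) : quot := exist _ (eqmod w) (ex_intro _ w erefl).

Lemma quot_eq (P R : quot) : sval P = sval R -> P = R.
Proof. by case: P R => [p hp] [r hr] /= Epr; subst r; rewrite (proof_irrelevance _ hp hr). Qed.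

Lemma qclass_eq x y : eqmod x y -> qclass x = qclass y.
Proof.
move=> Hxy; apply: quot_eq; apply: functional_extensionality => z.
apply: propositional_extensionality; split; last exact: eqmod_trans.
exact: eqmod_trans (eqmod_sym Hxy).
Qed.

Lemma qclass_eqmod x y : qclass x = qclass y -> eqmod x y.
Proof. by move/(f_equal (fun P : quot => sval P y)) => /= ->; exact: eqmod_refl. Qed.

Lemma quot_class (P : quot) : exists w, P = qclass w.
Proof. by case: P => p [w Ew]; exists w; apply: quot_eq. Qed.

Lemma eqmod_cat_class x z :
  (fun y => exists x' z', [/\ eqmod x x', eqmod z z' & eqmod (x' ++ z') y]) = eqmod (x ++ z).
Proof.
apply: functional_extensionality => y; apply: propositional_extensionality; split.
  by case=> x' [z' [Hx Hz Hy]]; exact: eqmod_trans (eqmod_cat Hx Hz) Hy.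
by move=> Hy; exists x, z; split => //; exact: eqmod_refl.
Qed.

Lemma eqmod_winv_class x : (fun y => exists x', eqmod x x' /\ eqmod (winv x') y) = eqmod (winv x).
Proof.
apply: functional_extensionality => y; apply: propositional_extensionality; split.
  by case=> x' [Hx Hy]; exact: eqmod_trans (eqmod_winv Hx) Hy.
by move=> Hy; exists x; split => //; exact: eqmod_refl.
Qed.

Lemma qmul_subproof (P R : quot) :
  exists w, (fun y => exists x' z', [/\ sval P x', sval R z' & eqmod (x' ++ z') y]) = eqmod w.
Proof.
case: (quot_class P) => x ->; case: (quot_class R) => z ->.
by exists (x ++ z); exact: eqmod_cat_class.
Qed.

Lemma qinv_subproof (P : quot) :
  exists w, (fun y => exists x', sval P x' /\ eqmod (winv x') y) = eqmod w.
Proof. by case: (quot_class P) => x ->; exists (winv x); exact: eqmod_winv_class. Qed.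

Definition qmul (P R : quot) : quot := exist _ _ (qmul_subproof P R).
Definition qinv (P : quot) : quot := exist _ _ (qinv_subproof P).
Definition qone : quot := qclass [::].

Lemma qmul_class x z : qmul (qclass x) (qclass z) = qclass (x ++ z).
Proof. exact/quot_eq/eqmod_cat_class. Qed.

Lemma qinv_class x : qinv (qclass x) = qclass (winv x).
Proof. exact/quot_eq/eqmod_winv_class. Qed.

Lemma quot_is_group : is_group qmul qone qinv.
Proof.
split.
- move=> P R T; case: (quot_class P) => x ->; case: (quot_class R) => y ->.
  by case: (quot_class T) => z ->; rewrite !qmul_class catA.
- by move=> P; case: (quot_class P) => x ->; rewrite qmul_class.
- move=> P; case: (quot_class P) => x ->; rewrite qinv_class qmul_class.
  by apply: qclass_eq; apply: ncl_freeq_nil; rewrite cats0; exact: freeq_Vcat.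
Qed.

Lemma weval_qclass w :
  weval qmul qone qinv (fun a => qclass [:: pos a]) w = qclass w.
Proof.
elim: w => [//|[a e] s IH]; rewrite /= IH.
by case: e; rewrite /leval /= ?qinv_class qmul_class.
Qed.

End Quotient.

Section Equivalences.
Variables (n : nat) (rho : rel 'I_n).
Hypotheses (rho_refl : reflexive rho) (rho_trans : transitive rho).
Local Notation word := (word rho).
Local Notation arrow := (arrow rho).
Local Notation cls := (cls rho).
Local Notation clt := (clt rho).
Local Notation linked := (@linked n rho).
Local Notation pos := (@pos n rho).
Local Notation Agen := (@Agen n rho).
Local Notation Bgen := (@Bgen n rho).

Definition transitive_functions_trivial : Prop :=
  forall (G : Type) (mul : G -> G -> G) (one : G) (inv : G -> G), is_group mul one inv ->
  forall u : 'I_n -> 'I_n -> G,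
    (forall i j r, rho i j -> rho j r -> mul (u i j) (u j r) = u i r) ->
  exists g : 'I_n -> G, forall i j, rho i j -> u i j = mul (g i) (inv (g j)).

Definition ncl_Agen_eq_Bgen : Prop := forall w : word, ncl Agen w <-> ncl Bgen w.

Definition Bgen_prod_conj_Agen : Prop :=
  forall b : word, Bgen b -> exists l : seq (word * word),
    [/\ 0 < size l, (forall k, k < size l -> Agen (nth ([::], [::]) l k).2) &
        freeq b (prod_conj l)].

Lemma ncl_Bgen_of_Agen x : Agen x -> ncl Bgen x.
Proof. by case/Agen_walk => v; exact: closed_walk_ncl_Bgen. Qed.

Lemma ncl_Agen_eq_Bgen_of_Bgen : (forall b, Bgen b -> ncl Agen b) -> ncl_Agen_eq_Bgen.
Proof. by move=> HB w; split; apply: ncl_sub => // x; exact: ncl_Bgen_of_Agen. Qed.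

Lemma Bgen_prod_conj_of_ncl_eq : ncl_Agen_eq_Bgen -> Bgen_prod_conj_Agen.
Proof.
move=> AB b Hb; have /ncl_Agen_prod_conj [l [Hl F]] : ncl Agen b by apply/AB/ncl_gen.
case: Hb => a _.
have Ht : Agen ([:: pos a] ++ winv [:: pos a]) by exists a, [::], a, [::].
exists (([::], [:: pos a] ++ winv [:: pos a]) :: l); split => //.
  move=> k Hk; have := mem_nth ([::], [::]) Hk; rewrite inE => /orP [/eqP -> //|].
  exact: Hl.
apply: freeq_trans F _.
exact: (freeq_cat (freeq_sym (freeq_catV [:: pos a])) (freeq_refl (prod_conj l))).
Qed.

Lemma ncl_eq_of_Bgen_prod_conj : Bgen_prod_conj_Agen -> ncl_Agen_eq_Bgen.
Proof.
move=> HB; apply: ncl_Agen_eq_Bgen_of_Bgen => b /HB [l [_ Hl F]].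
apply: ncl_freeq (freeq_sym F) (prod_conj_ncl _) => gx Hg.
by rewrite -(nth_index ([::], [::]) Hg); apply: Hl; rewrite index_mem.
Qed.

Lemma transitive_trivial_of_ncl_eq : ncl_Agen_eq_Bgen -> transitive_functions_trivial.
Proof.
move=> AB G mul one inv HG u u_trans.
have [h fh] : exists h : {set 'I_n} -> G, forall a : arrow, arrow_fun one u a = mul (h (src a)) (inv (h (tgt a))).
  apply: (closed_walks_potential HG) => x w Hw.
  apply: (weval_ncl HG (weval_Agen_arrow_fun HG rho_refl rho_trans u_trans)).
  exact/AB/(closed_walk_ncl_Bgen rho_refl rho_trans Hw).
exact: (transitive_fun_trivial HG rho_refl rho_trans u_trans fh).
Qed.

Definition hasse_spec A B (o : option (arrow * seq arrow)) : bool :=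
  if o is Some (a, p) then [&& path linked a p, src a == A & tgt (last a p) == B]
  else ~~ clt A B.

Lemma hasse_spec_exists A B : exists o, hasse_spec A B o.
Proof.
have [/(clt_hasse_path rho_refl rho_trans) [a [p [Hp Ea Eb]]]|] := boolP (clt A B).
  by exists (Some (a, p)); rewrite /= Hp Ea Eb !eqxx.
by exists None.
Qed.

Definition hasse_word A B : word :=
  if xchoose (hasse_spec_exists A B) is Some (a, p) then map pos (a :: p) else [::].

Lemma hasse_wordP A B : clt A B -> exists a p,
  [/\ path linked a p, src a = A, tgt (last a p) = B & hasse_word A B = map pos (a :: p)].
Proof.
rewrite /hasse_word; have := xchooseP (hasse_spec_exists A B).
case: xchoose => [[a p]|] /=; last by move/negbTE ->.
by case/and3P => Hp /eqP Ea /eqP Eb _; exists a, p.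
Qed.

Lemma hasse_word_nclt A B : ~~ clt A B -> hasse_word A B = [::].
Proof.
rewrite /hasse_word; have := xchooseP (hasse_spec_exists A B).
case: xchoose => [[a p]|] //= /and3P [Hp /eqP <- /eqP <-].
by rewrite (dpath_clt rho_refl rho_trans Hp).
Qed.

Lemma hasse_word_trans i j k : rho i j -> rho j k ->
  eqmod Agen (hasse_word (cls i) (cls j) ++ hasse_word (cls j) (cls k))
             (hasse_word (cls i) (cls k)).
Proof.
move=> Hij Hjk; have [Hji|Hji] := boolP (rho j i).
  rewrite (cls_eq rho_refl rho_trans Hij Hji) hasse_word_nclt ?clt_irr //.
  exact: eqmod_refl.
have [Hkj|Hkj] := boolP (rho k j).
  rewrite -(cls_eq rho_refl rho_trans Hjk Hkj) (hasse_word_nclt (A := cls j)) ?clt_irr //.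
  by rewrite cats0; exact: eqmod_refl.
have ltij : clt (cls i) (cls j) by rewrite clt_cls // Hij.
have ltjk : clt (cls j) (cls k) by rewrite clt_cls // Hjk.
case: (hasse_wordP ltij) => a1 [p1 [Hp1 Ea1 Eb1 ->]].
case: (hasse_wordP ltjk) => a2 [p2 [Hp2 Ea2 Eb2 ->]].
case: (hasse_wordP (clt_trans rho_refl rho_trans ltij ltjk)) => a3 [p3 [Hp3 Ea3 Eb3 ->]].
apply: ncl_gen; exists a1, (p1 ++ a2 :: p2), a3, p3; split => //.
- by rewrite cat_path Hp1 /= Hp2 andbT /linked Eb1 Ea2 eqxx.
- by rewrite Ea1 Ea3.
- by rewrite last_cat /= Eb2 Eb3.
- by rewrite -map_cat.
Qed.

Lemma ncl_eq_of_transitive_trivial : transitive_functions_trivial -> ncl_Agen_eq_Bgen.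
Proof.
move=> triv; apply: ncl_Agen_eq_Bgen_of_Bgen => b Hb.
pose u i j := qclass Agen (hasse_word (cls i) (cls j)).
have [i j k Hij Hjk|g Hg] := triv _ _ _ _ (quot_is_group Agen) u.
  by rewrite qmul_class; exact/qclass_eq/hasse_word_trans.
pose h (C : {set 'I_n}) := if [pick x in C] is Some x then g x else qone Agen.
have fh (a : arrow) : qclass Agen [:: pos a] = qmul (h (src a)) (qinv (h (tgt a))).
  have ltA := arrow_clt a.
  case/cleP: (clt_cle ltA) => i [j [Ei Ej Hij]].
  rewrite /h Ei Ej !cls_pick // -Hg ?rho_cls_rep // /u !cls_rep_cls //.
  apply: qclass_eq; rewrite -Ei -Ej in Hij *.
  case: (hasse_wordP ltA) => a2 [p2 [Hp2 Ea2 Eb2 ->]].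
  by apply: ncl_gen; exists a, [::], a2, p2; rewrite Ea2.
case/Bgen_walk: Hb => v Hv.
move: (weval_walk_potential (quot_is_group Agen) fh Hv).
rewrite weval_qclass (grp_mulgV (quot_is_group Agen)).
by move/qclass_eqmod; rewrite /eqmod cats0.
Qed.

End Equivalences.

Theorem proposition5p6 (n : nat) (rho : rel 'I_n)
    (rho_refl : reflexive rho) (rho_trans : transitive rho) :
  [<->
    (forall (G : Type) (mul : G -> G -> G) (one : G) (inv : G -> G),
        is_group mul one inv ->
        forall u : 'I_n -> 'I_n -> G,
          (forall i j r, rho i j -> rho j r -> mul (u i j) (u j r) = u i r) ->
          exists g : 'I_n -> G, forall i j, rho i j -> u i j = mul (g i) (inv (g j)));
    (forall w : word rho, ncl (@Agen n rho) w <-> ncl (@Bgen n rho) w);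
    (forall b : word rho, Bgen b ->
       exists l : seq (word rho * word rho),
         [/\ 0 < size l,
             (forall k, k < size l -> Agen (nth ([::], [::]) l k).2) &
             freeq b (flatten [seq gx.1 ++ gx.2 ++ winv gx.1 | gx <- l])])].
Proof.
tfae.
- exact: (ncl_eq_of_transitive_trivial rho_refl rho_trans).
- exact: Bgen_prod_conj_of_ncl_eq.
- move/(ncl_eq_of_Bgen_prod_conj rho_refl rho_trans).
  exact: (transitive_trivial_of_ncl_eq rho_refl rho_trans).
Qed.
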